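(* Let $\varepsilon>0$, $q\ge0$ an integer, and $s\in\{s^+,s^-\}$. With the notation of the context, define for $n\in\{4q,\dots,4q+3\}$ and $j\in\{1,\dots,4\}$: $r^j_n=X^j_\varepsilon(n\varepsilon)$, $p^j_n=m\,\frac{r^j_{n+1}-r^j_n}{\varepsilon}$, $\widetilde r_n=\widetilde X_\varepsilon(n\varepsilon)$, $\widetilde p_n=m\,\frac{\widetilde r_{n+1}-\widetilde r_n}{\varepsilon}$, and the average angular momentum $$\sigma=\frac1{16}\sum_{n=4q}^{4q+3}\sum_{j=1}^4 r^j_n\wedge p^j_n .$$ Then $$\sigma=\frac14\sum_{n=4q}^{4q+3}\widetilde r_n\wedge\widetilde p_n+s_z,\qquad\text{where } s_z=-\frac{\hbar}{2}\ \text{if } s=s^+,\quad s_z=+\frac{\hbar}{2}\ \text{if } s=s^- .$$ That is, the extended particle has intrinsic angular momentum $\mp\hbar/2$, independently of $\varepsilon$.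
   Context: Fix constants $\hbar>0$, $m>0$. In $\mathbb{R}^2$ let $u^1=(1,1)$, $u^2=(1,-1)$, $u^3=(-1,-1)$, $u^4=(-1,1)$. Let $s^+$ be the cyclic permutation $u^1\mapsto u^2\mapsto u^3\mapsto u^4\mapsto u^1$ and $s^-=(s^+)^{-1}$; $s^k$ denotes the $k$-th iterate. For $\varepsilon>0$ put $\gamma=(1+i)\sqrt{\hbar\varepsilon/(4m)}$. Given a continuous $\mathcal{V}:[0,\infty)\to\mathbb{C}^2$ and $Z_0\in\mathbb{C}^2$, define $Z^j_\varepsilon(0)=Z_0$ and for $n\ge1$, $n=4q+r$ ($0\le r\le3$): $Z^j_\varepsilon(n\varepsilon)=Z^j_\varepsilon((n-1)\varepsilon)+\mathcal{V}(4q\varepsilon)\varepsilon+\gamma(s^nu^j-s^{n-1}u^j)$, $j=1,\dots,4$. Define also $\widetilde Z_\varepsilon(0)=Z_0$, $\widetilde Z_\varepsilon(n\varepsilon)=\widetilde Z_\varepsilon((n-1)\varepsilon)+\mathcal{V}(4q\varepsilon)\varepsilon$ (the ''center of gravity'' process). Set $X^j_\varepsilon=\operatorname{Re}Z^j_\varepsilon$ and $\widetilde X_\varepsilon=\operatorname{Re}\widetilde Z_\varepsilon$ (componentwise real parts, in $\mathbb{R}^2$). For $a=(a_x,a_y),b=(b_x,b_y)\in\mathbb{R}^2$, $a\wedge b=a_xb_y-a_yb_x$. *)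

From Stdlib Require Import Reals Lra.
Open Scope R_scope.

Definition Cx := (R * R)%type.
Definition Cre (z : Cx) : R := fst z.
Definition Cim (z : Cx) : R := snd z.
Definition Cadd (z w : Cx) : Cx := (fst z + fst w, snd z + snd w).
Definition Cmul (z w : Cx) : Cx :=
  (fst z * fst w - snd z * snd w, fst z * snd w + snd z * fst w).
Definition CofR (x : R) : Cx := (x, 0).

Definition C2 := (Cx * Cx)%type.
Definition R2 := (R * R)%type.
Definition C2add (a b : C2) : C2 := (Cadd (fst a) (fst b), Cadd (snd a) (snd b)).
Definition C2scal (c : Cx) (a : C2) : C2 := (Cmul c (fst a), Cmul c (snd a)).
Definition C2ofR2 (v : R2) : C2 := (CofR (fst v), CofR (snd v)).
Definition ReC2 (a : C2) : R2 := (Cre (fst a), Cre (snd a)).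

Definition R2add (a b : R2) : R2 := (fst a + fst b, snd a + snd b).
Definition R2sub (a b : R2) : R2 := (fst a - fst b, snd a - snd b).
Definition R2scal (c : R) (a : R2) : R2 := (c * fst a, c * snd a).
Definition wedge (a b : R2) : R := fst a * snd b - snd a * fst b.

Inductive idx4 := I1 | I2 | I3 | I4.
Definition u (j : idx4) : R2 :=
  match j with
  | I1 => (1, 1) | I2 => (1, -1) | I3 => (-1, -1) | I4 => (-1, 1)
  end.

(* s^+ : u^1 -> u^2 -> u^3 -> u^4 -> u^1, s^- its inverse,
   as permutations of the index set (hence of {u^1,..,u^4}). *)
Inductive spin := Splus | Sminus.
Definition sperm (s : spin) (j : idx4) : idx4 :=
  match s, j with
  | Splus, I1 => I2 | Splus, I2 => I3 | Splus, I3 => I4 | Splus, I4 => I1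
  | Sminus, I1 => I4 | Sminus, I2 => I1 | Sminus, I3 => I2 | Sminus, I4 => I3
  end.
Definition siter (s : spin) (k : nat) (j : idx4) : R2 :=
  u (Nat.iter k (sperm s) j).

Definition gamma (hbar m eps : R) : Cx :=
  let a := sqrt (hbar * eps / (4 * m)) in (a, a).

(* Z^j_eps(n eps), with n = 4q + r, q = n / 4 *)
Fixpoint Zseq (hbar m eps : R) (V : R -> C2) (Z0 : C2) (s : spin) (j : idx4)
    (n : nat) : C2 :=
  match n with
  | O => Z0
  | S k =>
      C2add (C2add (Zseq hbar m eps V Z0 s j k)
                   (C2scal (CofR eps) (V (4 * INR (S k / 4) * eps))))
            (C2scal (gamma hbar m eps)
                    (C2ofR2 (R2sub (siter s (S k) j) (siter s k j))))
  end.

Fixpoint Ztseq (eps : R) (V : R -> C2) (Z0 : C2) (n : nat) : C2 :=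
  match n with
  | O => Z0
  | S k => C2add (Ztseq eps V Z0 k) (C2scal (CofR eps) (V (4 * INR (S k / 4) * eps)))
  end.

Definition Xseq hbar m eps V Z0 s j n : R2 := ReC2 (Zseq hbar m eps V Z0 s j n).
Definition Xtseq eps V Z0 n : R2 := ReC2 (Ztseq eps V Z0 n).

Definition cont_nonneg (f : R -> R) : Prop :=
  forall t, 0 <= t -> limit1_in f (fun x => 0 <= x) (f t) t.
Definition V_continuous (V : R -> C2) : Prop :=
  cont_nonneg (fun t => Cre (fst (V t))) /\ cont_nonneg (fun t => Cim (fst (V t))) /\
  cont_nonneg (fun t => Cre (snd (V t))) /\ cont_nonneg (fun t => Cim (snd (V t))).

Definition sum4 (f : idx4 -> R) : R := f I1 + f I2 + f I3 + f I4.

Definition r_ hbar m eps V Z0 s j n : R2 := Xseq hbar m eps V Z0 s j n.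
Definition p_ hbar m eps V Z0 s j n : R2 :=
  R2scal (m / eps) (R2sub (r_ hbar m eps V Z0 s j (S n)) (r_ hbar m eps V Z0 s j n)).
Definition rt_ eps V Z0 n : R2 := Xtseq eps V Z0 n.
Definition pt_ m eps V Z0 n : R2 :=
  R2scal (m / eps) (R2sub (rt_ eps V Z0 (S n)) (rt_ eps V Z0 n)).

Definition sigma_avg hbar m eps V Z0 s (q : nat) : R :=
  / 16 * sum_f_R0 (fun k => sum4 (fun j =>
      wedge (r_ hbar m eps V Z0 s j (4 * q + k)%nat) (p_ hbar m eps V Z0 s j (4 * q + k)%nat))) 3.

Definition s_z (hbar : R) (s : spin) : R :=
  match s with Splus => - (hbar / 2) | Sminus => hbar / 2 end.

(* Each particle is the centre of gravity plus an offset a (s^n u^j - u^j),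
   with a = Re gamma.  For every n the offsets have zero sum over j, so in the
   sum over j of r^j_n /\ p^j_n all terms that mix the centre of gravity with
   an offset cancel, leaving four copies of the centre-of-gravity angular
   momentum plus the angular momentum of the offsets alone.  Over one period
   of s the latter is the circulation of a square, -/+ 32 (m/eps) a^2, and
   since a^2 = hbar eps / (4 m) this is -/+ 8 hbar independently of eps. *)
From Stdlib Require Import Reals Lra Lia.
Open Scope R_scope.

Definition centered (w : idx4 -> R2) : Prop :=
  sum4 (fun j => fst (w j)) = 0 /\ sum4 (fun j => snd (w j)) = 0.

Lemma centered_scal_sub (c : R) (w z : idx4 -> R2) :
  centered w -> centered z -> centered (fun j => R2scal c (R2sub (w j) (z j))).
Proof.
  unfold centered, sum4, R2scal, R2sub; simpl.
  intros [Hw1 Hw2] [Hz1 Hz2]; split; nra.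
Qed.

Lemma sum4_wedge_add_centered (x y : R2) (w z : idx4 -> R2) :
  centered w -> centered z ->
  sum4 (fun j => wedge (R2add x (w j)) (R2add y (z j))) =
  4 * wedge x y + sum4 (fun j => wedge (w j) (z j)).
Proof.
  unfold centered, sum4, wedge, R2add; simpl.
  intros [Hw1 Hw2] [Hz1 Hz2]; nra.
Qed.

Lemma siter_succ (s : spin) (n : nat) (j : idx4) :
  siter s (S n) j = siter s n (sperm s j).
Proof. unfold siter; now rewrite Nat.iter_succ_r. Qed.

Lemma centered_siter (s : spin) (n : nat) : centered (siter s n).
Proof.
  induction n as [|n [IH1 IH2]].
  - unfold centered, sum4, siter; simpl; split; ring.
  - unfold centered, sum4 in *; rewrite !siter_succ.
    destruct s; simpl; split; lra.
Qed.

Lemma siter_periodic (s : spin) (q k : nat) (j : idx4) :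
  siter s (4 * q + k) j = siter s k j.
Proof.
  unfold siter; rewrite Nat.iter_add.
  induction q as [|q IH]; [reflexivity|].
  replace (4 * S q)%nat with (4 + 4 * q)%nat by lia.
  rewrite Nat.iter_add.
  assert (Hperiod : forall i, Nat.iter 4 (sperm s) i = i) by (destruct s, i; reflexivity).
  now rewrite Hperiod.
Qed.

Definition spin_offset (a : R) (s : spin) (n : nat) (j : idx4) : R2 :=
  R2scal a (R2sub (siter s n j) (u j)).

Lemma centered_spin_offset (a : R) (s : spin) (n : nat) :
  centered (spin_offset a s n).
Proof.
  apply centered_scal_sub; [apply centered_siter|].
  exact (centered_siter s 0).
Qed.

Lemma Xseq_spin_offset (hbar m eps : R) (V : R -> C2) (Z0 : C2) (s : spin)
    (j : idx4) (n : nat) :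
  Xseq hbar m eps V Z0 s j n =
  R2add (Xtseq eps V Z0 n) (spin_offset (fst (gamma hbar m eps)) s n j).
Proof.
  unfold Xseq, Xtseq, spin_offset.
  induction n as [|n IH].
  - destruct Z0 as [[a b] [c d]]; destruct j;
      unfold ReC2, R2add, R2scal, R2sub, siter; simpl; f_equal; ring.
  - unfold ReC2 in *; simpl; injection IH as IH1 IH2.
    unfold R2add, R2scal, R2sub, C2add, C2scal, C2ofR2, Cadd, Cmul, CofR, Cre in *;
      simpl in *; rewrite IH1, IH2; f_equal; ring.
Qed.

Lemma R2scal_sub_add (c : R) (x1 w1 x0 w0 : R2) :
  R2scal c (R2sub (R2add x1 w1) (R2add x0 w0)) =
  R2add (R2scal c (R2sub x1 x0)) (R2scal c (R2sub w1 w0)).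
Proof. unfold R2scal, R2sub, R2add; simpl; f_equal; ring. Qed.

Lemma sum4_angular_momentum (hbar m eps : R) (V : R -> C2) (Z0 : C2) (s : spin)
    (n : nat) :
  sum4 (fun j => wedge (r_ hbar m eps V Z0 s j n) (p_ hbar m eps V Z0 s j n)) =
  4 * wedge (rt_ eps V Z0 n) (pt_ m eps V Z0 n) +
  sum4 (fun j => wedge (spin_offset (fst (gamma hbar m eps)) s n j)
    (R2scal (m / eps) (R2sub (spin_offset (fst (gamma hbar m eps)) s (S n) j)
                             (spin_offset (fst (gamma hbar m eps)) s n j)))).
Proof.
  set (a := fst (gamma hbar m eps)).
  transitivity (sum4 (fun j =>
    wedge (R2add (rt_ eps V Z0 n) (spin_offset a s n j))
          (R2add (pt_ m eps V Z0 n)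
                 (R2scal (m / eps) (R2sub (spin_offset a s (S n) j) (spin_offset a s n j)))))).
  - unfold sum4, p_, r_, pt_, rt_; now rewrite !Xseq_spin_offset, !R2scal_sub_add.
  - apply sum4_wedge_add_centered;
      [apply centered_spin_offset | apply centered_scal_sub; apply centered_spin_offset].
Qed.

Definition spin_sign (s : spin) : R :=
  match s with Splus => -1 | Sminus => 1 end.

Lemma spin_offset_circulation (a c : R) (s : spin) (q : nat) :
  sum_f_R0 (fun k => sum4 (fun j => wedge (spin_offset a s (4 * q + k) j)
      (R2scal c (R2sub (spin_offset a s (S (4 * q + k)) j)
                       (spin_offset a s (4 * q + k) j))))) 3 =
  32 * spin_sign s * c * a ^ 2.
Proof.
  cbn [sum_f_R0]; unfold sum4, spin_offset.
  rewrite <- !Nat.add_succ_r, !siter_periodic.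
  destruct s; unfold siter, wedge, R2scal, R2sub, u; simpl; ring.
Qed.

Theorem theorem2 (hbar m eps : R) (V : R -> C2) (Z0 : C2) (q : nat) (s : spin) :
  0 < hbar -> 0 < m -> 0 < eps -> V_continuous V ->
  sigma_avg hbar m eps V Z0 s q =
    / 4 * sum_f_R0 (fun k => wedge (rt_ eps V Z0 (4 * q + k)%nat) (pt_ m eps V Z0 (4 * q + k)%nat)) 3
    + s_z hbar s.
Proof.
  intros Hh Hm He _.
  assert (Ha : fst (gamma hbar m eps) ^ 2 = hbar * eps / (4 * m)).
  { unfold gamma; simpl; rewrite Rmult_1_r; apply sqrt_sqrt.
    apply Rlt_le, Rdiv_lt_0_compat; nra. }
  unfold sigma_avg.
  rewrite (sum_eq _ _ 3 (fun k _ => sum4_angular_momentum hbar m eps V Z0 s (4 * q + k))).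
  rewrite sum_plus, spin_offset_circulation, Ha.
  cbn [sum_f_R0].
  destruct s; unfold s_z, spin_sign; field; lra.
Qed.
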